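(* Suppose that the level-$\ell$ flux coarse degrees of freedom are the averages over every level-$\ell$ face, $1\le\ell\le L-1$. Then for every $w\in\widetilde W^\ell_B$ the function $(I-P^\ell)E^\ell w$ again satisfies $b\big((I-P^\ell)E^\ell w,q_0\big)=0$ for all $q_0\in Q^\ell_0$.
   Context: Setting. $\Omega\subset\mathbb R^2$ is a bounded polygonal domain, $k$ is a coefficient that is constant, $k_i>0$, on each top-level subdomain (more generally a symmetric uniformly positive definite matrix), and for flux fields $u,v$ and scalar $q$ we set $a(u,v)=\int k^{-1}u\cdot v\,dx$, $b(u,q)=-\int(\nabla\cdot u)\,q\,dx$, where for functions that may be discontinuous across subdomain boundaries the integrals are taken piecewise over the subdomains (and the $a$-norm $\|v\|_a=\sqrt{a(v,v)}$ likewise). Level 0: a triangulation of $\Omega$ into (quadrilateral) elements of size $h=H^0$; $U$ is the lowest-order Raviart–Thomas (RT0) space with zero normal component on $\partial\Omega$ and $Q$ the piecewise constants with zero mean on $\Omega$. For levels $\ell=1,\dots,L-1$ there are nested nonoverlapping decompositions of $\Omega$ into level-$\ell$ substructures $\Omega^\ell_i$, $i=1,\dots,N^\ell$, each a union of level-$(\ell-1)$ substructures (level-0 substructures are the elements), forming a conforming quasi-uniform triangulation with characteristic size $H^\ell$. A level-$\ell$ face is the intersection of the boundaries of two adjacent level-$\ell$ substructures; $\Gamma^\ell$ is the set of level-$\ell$ degrees of freedom shared by two level-$\ell$ substructures. Level-1 degrees of freedom are the RT0 flux degrees of freedom; level-$\ell$ degrees of freedom ($\ell\ge2$) are the level-$(\ell-1)$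 flux coarse degrees of freedom. Pressure spaces: $Q^1=Q$, $Q^\ell=Q^\ell_0\oplus Q^\ell_I$, where $Q^\ell_0$ consists of functions constant on each $\Omega^\ell_i$ with zero mean on $\Omega$, $Q^\ell_I=Q^\ell_1\times\dots\times Q^\ell_{N^\ell}$ with $Q^\ell_i$ the functions of $Q^\ell$ supported in $\Omega^\ell_i$ with zero mean on $\Omega^\ell_i$; $Q^{\ell+1}=Q^\ell_0$. Flux spaces: $U^1=U$; $W^\ell=W^\ell_1\times\dots\times W^\ell_{N^\ell}$, where $W^\ell_i$ is the space of flux functions on $\Omega^\ell_i$ (spanned by level-$\ell$ shape functions) with all degrees of freedom on $\partial\Omega^\ell_i\cap\partial\Omega$ zero; $U^\ell\subset W^\ell$ is the subspace of functions continuous across $\Gamma^\ell$; $U^\ell_I\subset U^\ell$ the functions whose degrees of freedom on $\Gamma^\ell$ vanish. $P^\ell$ maps $w\in W^\ell$ to $(u_I,p_I)\in(U^\ell_I,Q^\ell_I)$ solving $a(u_I,v_I)+b(v_I,p_I)=a(w,v_I)$ for all $v_I\in U^\ell_I$ and $b(u_I,q_I)=b(w,q_I)$ for all $q_I\in Q^\ell_I$; we write $(I-P^\ell)w:=w-u_I$, and $w$ is called Stokes harmonic (on level $\ell$) if $u_I=0$. The flux coarse degrees of freedom on level $\ell$ are averages of level-$\ell$ flux degrees of freedom over faces. $\widetilde W^\ell\subset W^\ell$: functions whose flux coarse degrees of freedom have a common value on each face shared by two adjacent level-$\ell$ substructures and vanish on $\partial\Omega$; $\widetilde W^\ell_\Delta\subset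 W^\ell$: functions all of whose flux coarse degrees of freedom vanish; $\widetilde W^\ell_\Pi\subset\widetilde W^\ell$: Stokes harmonic functions in $\widetilde W^\ell$ (uniquely determined by their coarse degrees of freedom), so $\widetilde W^\ell=\widetilde W^\ell_\Delta\oplus\widetilde W^\ell_\Pi$; $U^{\ell+1}=\widetilde W^\ell_\Pi$. $E^\ell:\widetilde W^\ell\to U^\ell$ is the projection averaging the values of each interface degree of freedom $x\in\partial\Omega^\ell_i\cap\partial\Omega^\ell_j$ with weights $e_i(x)=k_i^{-\gamma}/(k_i^{-\gamma}+k_j^{-\gamma})$ for a fixed $\gamma\ge0$ (weight 1 for interior degrees of freedom). The balanced space is $\widetilde W^\ell_B=\{w\in\widetilde W^\ell:\ b(w,q_0)=0\ \forall q_0\in Q^\ell_0\}$. *)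

(* Abstract (discrete, degree-of-freedom level) model of one
   level l of the multilevel BDDC setting for the RT0 mixed problem. *)
From HB Require Import structures.
From mathcomp Require Import all_boot all_order all_algebra.
Set Implicit Arguments. Unset Strict Implicit. Unset Printing Implicit Defensive.
Import Order.TTheory GRing.Theory Num.Theory.
Local Open Scope ring_scope.

(* Data of one level l (1 <= l <= L-1):
   S  : level-l substructures Omega^l_i
   X  : level-l flux degrees of freedom (global locations)
   C  : pressure cells carrying the basis of Q^l (level-(l-1) substructures,
        i.e. elements for l = 1); each lies in one substructure [cell_sub]
   F  : level-l faces (intersection of boundaries of two adjacent
        substructures [fs1 f], [fs2 f])
   A flux field w in W^l is given by its local dof values  w i x  (i : S). *)
Record mlevel (R : realFieldType) := MLevel {
  S : finType; X : finType; C : finType; F : finType;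
  own : S -> X -> bool;        (* x is a dof of the closure of Omega_i *)
  onbd : S -> X -> bool;       (* x lies on the boundary of Omega_i *)
  bnd : X -> bool;             (* x lies on the boundary of Omega *)
  sgn : S -> X -> R;           (* +1/-1 : orientation of dof x wrt outward normal of Omega_i *)
  m : X -> R;                  (* flux measure of dof x : flux through x = m x * value *)
  cell_sub : C -> S;
  area : C -> R;
  face_of : X -> option F;
  fs1 : F -> S; fs2 : F -> S;
  (* divint u c = integral over cell c of div u (piecewise, of the local piece) *)
  divint : (S -> X -> R) -> C -> R;
  onbd_own : forall i x, onbd i x -> own i x;
  m_pos : forall x, 0 < m x;
  area_pos : forall c, 0 < area c;
  sgn_pm : forall i x, sgn i x = 1 \/ sgn i x = -1;
  fs_neq : forall f, fs1 f != fs2 f;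
  face_onbd : forall x f, face_of x = Some f -> onbd (fs1 f) x && onbd (fs2 f) x;
  face_own : forall x f i, face_of x = Some f -> own i x -> i = fs1 f \/ i = fs2 f;
  face_nbnd : forall x f, face_of x = Some f -> ~~ bnd x;
  onbd_face : forall i x, onbd i x -> ~~ bnd x -> exists f, face_of x = Some f;
  sgn_face : forall x f, face_of x = Some f -> sgn (fs1 f) x = 1 /\ sgn (fs2 f) x = -1;
  divint_lin : forall (s : R) (u v : S -> X -> R) c,
      divint (fun i x => s * u i x + v i x) c = s * divint u c + divint v c;
  divint_local : forall (u v : S -> X -> R) c,
      (forall x, u (cell_sub c) x = v (cell_sub c) x) -> divint u c = divint v c;
  div_thm : forall (u : S -> X -> R) i,
      \sum_(c | cell_sub c == i) divint u c
      = \sum_(x | onbd i x) sgn i x * m x * u i x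
}.

Section Spaces.
Variables (R : realFieldType) (L : mlevel R).

Definition fluxfun := S L -> X L -> R.
Definition pressfun := C L -> R.

Definition bform (u : fluxfun) (q : pressfun) : R :=
  - \sum_c q c * divint u c.

Definition inW (w : fluxfun) : Prop :=
  forall i x, (~~ own i x -> w i x = 0) /\ (bnd x -> w i x = 0).

Definition inGamma (x : X L) : Prop :=
  exists i j, i <> j /\ onbd i x /\ onbd j x.

Definition inU (w : fluxfun) : Prop :=
  inW w /\ forall i j x, onbd i x -> onbd j x -> w i x = w j x.

Definition inUI (w : fluxfun) : Prop :=
  inU w /\ forall i x, inGamma x -> w i x = 0.

Definition inQ (q : pressfun) : Prop := \sum_c area c * q c = 0.

Definition inQ0 (q : pressfun) : Prop :=
  inQ q /\ exists g : S L -> R, forall c, q c = g (cell_sub c).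

Definition inQI (q : pressfun) : Prop :=
  forall i, \sum_(c | cell_sub c == i) area c * q c = 0.

(* flux coarse dof: (flux-weighted) average over face f of the piece of w on Omega_i *)
Definition favg (w : fluxfun) (i : S L) (f : F L) : R :=
  (\sum_(x | face_of x == Some f) m x * w i x) / (\sum_(x | face_of x == Some f) m x).

Definition inWt (w : fluxfun) : Prop :=
  inW w /\ forall f, favg w (fs1 f) f = favg w (fs2 f) f.

Definition inWB (w : fluxfun) : Prop :=
  inWt w /\ forall q0, inQ0 q0 -> bform w q0 = 0.

(* E^l with weights e_i = rho_i / (rho_i + rho_j), rho_i standing for k_i^{-gamma} *)
Definition Eop (rho : S L -> R) (w : fluxfun) : fluxfun :=
  fun i x =>
    if own i x then
      match face_of x with
      | Some f => (rho (fs1 f) * w (fs1 f) x + rho (fs2 f) * w (fs2 f) x)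
                  / (rho (fs1 f) + rho (fs2 f))
      | None => w i x
      end
    else 0.

End Spaces.

From HB Require Import structures.
From mathcomp Require Import all_boot all_order all_algebra.
From mathcomp Require Import ring.
Set Implicit Arguments. Unset Strict Implicit. Unset Printing Implicit Defensive.
Import Order.TTheory GRing.Theory Num.Theory.
Local Open Scope ring_scope.

(* A pressure q0 in Q^l_0 takes a constant value g i on each
   substructure Omega_i, so by the divergence theorem on every Omega_i the
   form b(u, q0) only sees the normal fluxes of u through the substructure
   boundaries: b(u, q0) = - bflux g u.  Grouping the boundary degrees of
   freedom by level-l faces (the others lie on the boundary of Omega, where
   fluxes in W^l vanish), bflux g u depends on u only through the face fluxes
   face_flux u i f = sum_{x in f} m x * u i x of the two pieces adjacent to
   each face f.  These face fluxes are
   - unchanged by the averaging E^l, because the flux coarse degrees of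
     freedom (face averages) of w agree on both sides of every face;
   - zero for u_I, which vanishes on the interface Gamma^l.
   Hence b((I - P^l) E^l w, q0) = b(w, q0) = 0 since w is balanced. *)

Section FaceFluxes.
Variables (R : realFieldType) (L : mlevel R).

Definition bflux (g : S L -> R) (u : fluxfun L) : R :=
  \sum_x \sum_(i | onbd i x) g i * (sgn i x * m x * u i x).

Definition face_flux (u : fluxfun L) (i : S L) (f : F L) : R :=
  \sum_(x | face_of x == Some f) m x * u i x.

Lemma bform_bflux (u : fluxfun L) (q : pressfun L) (g : S L -> R) :
  (forall c, q c = g (cell_sub c)) -> bform u q = - bflux g u.
Proof.
move=> Hq; rewrite /bform /bflux; congr (- _).
rewrite (partition_big (@cell_sub _ L) predT) //=.
under eq_bigr => i _.
  under eq_bigr => c /eqP Hc do rewrite Hq Hc.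
  rewrite -big_distrr /= div_thm big_distrr /= big_mkcond /=.
over.
by rewrite exchange_big; apply: eq_bigr => x _; rewrite [RHS]big_mkcond.
Qed.

Lemma face_fluxB (u v : fluxfun L) i f :
  face_flux (fun i x => u i x - v i x) i f = face_flux u i f - face_flux v i f.
Proof. by rewrite /face_flux -sumrB; apply: eq_bigr => x _; rewrite mulrBr. Qed.

(* A face dof is seen by exactly its two adjacent substructures, with
   opposite orientations. *)
Lemma bflux_at_face (x : X L) (f : F L) (g : S L -> R) (u : fluxfun L) :
  face_of x = Some f ->
  \sum_(i | onbd i x) g i * (sgn i x * m x * u i x)
  = g (fs1 f) * (m x * u (fs1 f) x) - g (fs2 f) * (m x * u (fs2 f) x).
Proof.
move=> Hf; have /andP [H1 H2] := face_onbd Hf; have [s1 s2] := sgn_face Hf.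
rewrite (bigD1 (fs1 f)) //= (bigD1 (fs2 f)) /=; last by rewrite H2 eq_sym fs_neq.
rewrite big1 ?addr0; first by rewrite s1 s2; ring.
move=> i /andP [/andP [Hi n1] n2].
by have [e|e] := face_own Hf (onbd_own Hi); rewrite e eqxx in n1 n2.
Qed.

Lemma bflux_faces (g : S L -> R) (u : fluxfun L) :
  (forall i x, onbd i x -> bnd x -> u i x = 0) ->
  bflux g u = \sum_f (g (fs1 f) * face_flux u (fs1 f) f
                      - g (fs2 f) * face_flux u (fs2 f) f).
Proof.
move=> u_bnd.
have per_dof x : \sum_(i | onbd i x) g i * (sgn i x * m x * u i x)
    = \sum_(f | face_of x == Some f)
        (g (fs1 f) * (m x * u (fs1 f) x) - g (fs2 f) * (m x * u (fs2 f) x)).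
  case Hx: (face_of x) => [f0|].
    by rewrite (big_pred1 f0) ?(bflux_at_face g u Hx) // => f; rewrite eq_sym.
  rewrite [RHS]big_pred0 // big1 // => i Hi.
  have /u_bnd -> // : bnd x.
    by apply/negPn/negP => /(onbd_face Hi) [f]; rewrite Hx.
  by rewrite !mulr0.
rewrite /bflux (eq_bigr _ (fun x _ => per_dof x)) (exchange_big_dep xpredT) //=.
apply: eq_bigr => f _.
by rewrite sumrB /face_flux !mulr_sumr.
Qed.

Lemma face_flux_eq (w : fluxfun L) (f : F L) :
  favg w (fs1 f) f = favg w (fs2 f) f ->
  face_flux w (fs1 f) f = face_flux w (fs2 f) f.
Proof.
rewrite /favg /face_flux.
have [D0|Dn0] := eqVneq (\sum_(x | face_of x == Some f) m x) 0.
  have m0 := psumr_eq0P (fun x _ => ltW (m_pos x)) D0.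
  by move=> _; rewrite !big1 // => x /m0 ->; rewrite mul0r.
by move=> E; apply: (mulIf (invr_neq0 Dn0)).
Qed.

Lemma face_flux_Eop (rho : S L -> R) (w : fluxfun L) (f : F L) k :
  rho (fs1 f) + rho (fs2 f) != 0 ->
  favg w (fs1 f) f = favg w (fs2 f) f ->
  k = fs1 f \/ k = fs2 f ->
  face_flux (Eop rho w) k f = face_flux w k f.
Proof.
move=> rho_nz avg_eq Hk.
set r1 := rho (fs1 f); set r2 := rho (fs2 f).
have Eop_face x : face_of x == Some f ->
    Eop rho w k x = (r1 * w (fs1 f) x + r2 * w (fs2 f) x) / (r1 + r2).
  move=> /eqP Hx; have /andP [H1 H2] := face_onbd Hx.
  have k_own : own k x by case: Hk => ->; apply: onbd_own.
  by rewrite /Eop k_own Hx.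
have flux_eq := face_flux_eq avg_eq.
have -> : face_flux w k f = face_flux w (fs1 f) f by case: Hk => ->.
rewrite /face_flux (eq_bigr _ (fun x Hx => congr1 _ (Eop_face x Hx))).
rewrite (eq_bigr (fun x => (r1 * (m x * w (fs1 f) x)
                            + r2 * (m x * w (fs2 f) x)) / (r1 + r2))); last first.
  by move=> x _; field.
rewrite -mulr_suml big_split /= -!mulr_sumr.
by move: flux_eq; rewrite /face_flux => ->; field.
Qed.

Lemma face_flux_UI (u : fluxfun L) i (f : F L) : inUI u -> face_flux u i f = 0.
Proof.
move=> [_ u_Gamma]; apply: big1 => x /eqP Hx.
rewrite u_Gamma ?mulr0 //; exists (fs1 f), (fs2 f).
by split; [exact/eqP/fs_neq | exact/andP/face_onbd/Hx].
Qed.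

End FaceFluxes.

Theorem mainTheorem3 (R : realFieldType) (L : mlevel R) (rho : S L -> R)
    (a : fluxfun L -> fluxfun L -> R) :
  (forall i, 0 < rho i) ->
  forall w : fluxfun L, inWB w ->
  forall (uI : fluxfun L) (pI : pressfun L),
    inUI uI -> inQI pI ->
    (forall vI, inUI vI -> a uI vI + bform vI pI = a (Eop rho w) vI) ->
    (forall qI, inQI qI -> bform uI qI = bform (Eop rho w) qI) ->
  forall q0 : pressfun L, inQ0 q0 ->
    bform (fun i x => Eop rho w i x - uI i x) q0 = 0.
Proof.
move=> rho_pos w [[w_W w_avg] w_bal] uI pI uI_UI _ _ _ q0 q0_Q0.
have [_ [g q0_g]] := q0_Q0.
have w_bnd i x : onbd i x -> bnd x -> w i x = 0 by move=> _ /(w_W i x).2.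
have [[uI_W _] _] := uI_UI.
have uI_bnd i x : onbd i x -> bnd x -> uI i x = 0 by move=> _ /(uI_W i x).2.
have Ew_bnd i x : onbd i x -> bnd x -> Eop rho w i x = 0.
  move=> Hi Hb; rewrite /Eop; case: (own i x) => //.
  case Hx: (face_of x) => [f|]; last exact: w_bnd.
  by have := face_nbnd Hx; rewrite Hb.
have rho_nz f : rho (fs1 f) + rho (fs2 f) != 0 by rewrite gt_eqF ?addr_gt0.
rewrite (bform_bflux _ q0_g) -(w_bal q0 q0_Q0) (bform_bflux _ q0_g).
congr (- _); rewrite !bflux_faces //; last first.
  by move=> i x Hi Hb; rewrite Ew_bnd // uI_bnd // subrr.
apply: eq_bigr => f _.
rewrite !face_fluxB !(face_flux_UI _ _ uI_UI) !subr0.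
by rewrite !face_flux_Eop //; [right | left].
Qed.
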